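(* Let $A\ge A^*:=\mu T(e^{\rho T}-1)^{-1}$, $\phi\in\mathcal C_A$, and let $(v_n)_{n\ge0}$ be the sequence defined in the context. There exists a modulus $\widehat m$ such that $$\sup_{n\ge1}\big|e^{\rho t}v_n(t,x)-\phi(x)\big|\le\widehat m(t)\quad\text{for all }(t,x)\in\overline Q.$$
   Context: $W$ is a one-dimensional Brownian motion; constants $\mu>0$, $\sigma>0$, $\rho>0$, $T>0$, $\lambda_f>0$, $\lambda_p>0$; $c(\zeta)=(\lambda_f+(1+\lambda_p)\zeta)\mathbf 1_{\{\zeta>0\}}$; for $\psi:[0,\infty)\to\mathbb R$, $\mathcal I(\psi)(x):=\sup_{\zeta>0}(\psi(x+\zeta)-c(\zeta))$; $a^+=\max(a,0)$. $Q:=(0,T)\times(0,\infty)$. For $x\ge0$, $X^x_s:=x+\mu s+\sigma W_s$, $\theta^x:=\inf\{s>0:X^x_s<0\}$. $\mathcal C_A$: the set of continuous nondecreasing $\phi:[0,\infty)\to[0,\infty)$ with $(\mathcal I(\phi)(x))^+\le\phi(x)$ for all $x$, $\phi(0)=(\mathcal I(\phi)(0))^+$, and $x\mapsto\phi(x)-x$ nondecreasing with values in $[0,A]$. Sequence: $v_0(t,x):=\mathbb E[e^{-\rho t}\phi(X^x_t)\mathbf 1_{\{\theta^x\ge t\}}]$, and for $n\ge1$, $v_n\in C^\infty(Q)\cap C(\overline Q)$ is the (unique) solution of $\rho v_n+(\partial_t-\mu\partial_x-\tfrac12\sigma^2\partial_{xx})v_n=0$ on $Q$, $v_n(0,x)=\phi(x)$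 for $x\ge0$, $v_n(t,0)=(\mathcal I(v_{n-1}(t,\cdot))(0))^+$ for $t\in[0,T]$; these satisfy $e^{-\rho t}x\le v_n(t,x)\le e^{-\rho t}(x+A+\mu t)$. A modulus is an increasing function $m:[0,\infty)\to[0,\infty)$, continuous at $0$, with $m(0)=0$. *)

From Stdlib Require Import Reals Lra List.
From Coquelicot Require Import Coquelicot.
Open Scope R_scope.

Definition cost (lf lp z : R) : R :=
  if Rlt_dec 0 z then lf + (1 + lp) * z else 0.

Definition Iop (lf lp : R) (psi : R -> R) (x : R) : Rbar :=
  Lub_Rbar (fun r => exists z, 0 < z /\ r = psi (x + z) - cost lf lp z).

Definition rbar_pos (r : Rbar) : Rbar :=
  match r with
  | Finite a => Finite (Rmax a 0)
  | p_infty => p_infty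
  | m_infty => Finite 0
  end.

Definition in_CA (lf lp A : R) (phi : R -> R) : Prop :=
  (forall x, 0 <= x ->
     filterlim phi (within (fun y => 0 <= y) (locally x)) (locally (phi x)))
  /\ (forall x y, 0 <= x -> x <= y -> phi x <= phi y)
  /\ (forall x, 0 <= x -> 0 <= phi x)
  /\ (forall x, 0 <= x -> Rbar_le (rbar_pos (Iop lf lp phi x)) (Finite (phi x)))
  /\ Finite (phi 0) = rbar_pos (Iop lf lp phi 0)
  /\ (forall x y, 0 <= x -> x <= y -> phi x - x <= phi y - y)
  /\ (forall x, 0 <= x -> 0 <= phi x - x <= A).

(* transition density of X^x_s = x + mu s + sigma W_s killed when leaving
   [0,oo) (method of images):  P(X^x_t in dy, theta^x >= t) = kdens t x y dy,
   for t > 0, x >= 0, y > 0. *)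
Definition kdens (mu sigma t x y : R) : R :=
  / (sigma * sqrt (2 * PI * t)) *
  (exp (- (y - x - mu * t) ^ 2 / (2 * sigma ^ 2 * t))
   - exp (- 2 * mu * x / sigma ^ 2)
     * exp (- (y + x - mu * t) ^ 2 / (2 * sigma ^ 2 * t))).

(* v_0(t,x) = E[e^{-rho t} phi(X^x_t) 1_{theta^x >= t}] *)
Definition v0 (mu sigma rho : R) (phi : R -> R) (t x : R) : R :=
  if Rle_dec t 0 then phi x
  else exp (- rho * t) *
       RInt_gen (fun y => phi y * kdens mu sigma t x y)
                (at_point 0) (Rbar_locally p_infty).

Fixpoint Dw (w : list bool) (f : R -> R -> R) : R -> R -> R :=
  match w with
  | nil => f
  | b :: w' =>
      let g := Dw w' f in
      if b then fun t x => Derive (fun s => g s x) t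
      else fun t x => Derive (fun y => g t y) x
  end.

Definition inQ (T t x : R) : Prop := 0 < t < T /\ 0 < x.
Definition inQbar (T t x : R) : Prop := 0 <= t <= T /\ 0 <= x.

Definition smooth_on_Q (T : R) (f : R -> R -> R) : Prop :=
  forall (w : list bool) t x, inQ T t x ->
    filterlim (fun p : R * R => Dw w f (fst p) (snd p))
              (locally (t, x)) (locally (Dw w f t x))
    /\ ex_derive (fun s => Dw w f s x) t
    /\ ex_derive (fun y => Dw w f t y) x.

Definition cont_on_Qbar (T : R) (f : R -> R -> R) : Prop :=
  forall t x, inQbar T t x ->
    filterlim (fun p : R * R => f (fst p) (snd p))
              (within (fun p : R * R => inQbar T (fst p) (snd p)) (locally (t, x)))
              (locally (f t x)).

Definition is_modulus (m : R -> R) : Prop :=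
  (forall s t, 0 <= s -> s < t -> m s < m t)
  /\ (forall t, 0 <= t -> 0 <= m t)
  /\ m 0 = 0
  /\ filterlim m (within (fun s => 0 <= s) (locally 0)) (locally 0).

From Stdlib Require Import Reals Lra Lia Psatz Classical ClassicalEpsilon.
From Coquelicot Require Import Coquelicot.
Open Scope R_scope.

(* Comparison with explicit barriers.  The operator
     L u = rho u + u_t - mu u_x - sigma^2/2 u_xx
   satisfies a maximum principle on rectangles [0,t1] x [0,R] because rho > 0, and
     e^{-rho t} (a + C e^t ((x - x0)^2 + (sigma^2 + mu^2) t) + D e^{-lam x + sigma^2 lam^2 t / 2})
   is a supersolution of L u = 0.  Fix e > 0.  Since phi - id is monotone and bounded, phi is
   uniformly continuous, hence |phi y - phi x| <= e + C (y - x)^2, so barriers centred at x0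
   with a = phi(x0) + e or a = phi(x0) - e bound v_n at (t, x0); the a priori bounds on v_n take
   care of a far boundary x = R.  At x = 0 we argue by induction on n, using
   v_n(t,0) = (I v_{n-1}(t,.)(0))^+ and phi(0) = (I phi (0))^+: from above because no jump beats
   phi(0), from below because near-optimal jumps are bounded away from 0 (where the exponential
   term of the barrier is already small) and have bounded cost (so a short discount loses
   little).  Hence |e^{rho t} v_n - phi| <= 18 e for t <= t1(e), uniformly in n and x, and
   t plus the supremum of these errors over [0,t] is a modulus. *)

(** * Continuity and maxima on rectangles *)

Lemma ball_R (x e y : R) : ball x e y <-> Rabs (y - x) < e.
Proof. reflexivity. Qed.

Lemma ball_RxR (p q : R * R) (e : R) :
  ball p e q <-> Rabs (fst q - fst p) < e /\ Rabs (snd q - snd p) < e.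
Proof. destruct p, q; reflexivity. Qed.

Definition rect (a b c d t x : R) : Prop := a <= t <= b /\ c <= x <= d.

Definition cont2_within (D : R -> R -> Prop) (f : R -> R -> R) (t x : R) : Prop :=
  forall eps, 0 < eps -> exists d, 0 < d /\ forall t' x', D t' x' ->
    Rabs (t' - t) < d -> Rabs (x' - x) < d -> Rabs (f t' x' - f t x) < eps.

Lemma cont2_within_of_filterlim (D : R -> R -> Prop) (f : R -> R -> R) (t x : R) :
  filterlim (fun p : R * R => f (fst p) (snd p))
    (within (fun p : R * R => D (fst p) (snd p)) (locally (t, x))) (locally (f t x)) ->
  cont2_within D f t x.
Proof.
  intros H eps Heps.
  destruct (proj1 (filterlim_locally _ _) H (mkposreal eps Heps)) as [d Hd].
  exists d; split; [apply cond_pos|].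
  intros t' x' HD Ht Hx.
  apply (Hd (t', x')); [apply ball_RxR; auto | exact HD].
Qed.

Lemma cont2_within_of_continuous (D : R -> R -> Prop) (f : R -> R -> R) (t x : R) :
  continuous (fun p : R * R => f (fst p) (snd p)) (t, x) -> cont2_within D f t x.
Proof.
  intros H. apply cont2_within_of_filterlim.
  exact (filterlim_filter_le_1 _ (filter_le_within _) H).
Qed.

Lemma cont_within_eps_delta (f : R -> R) (D : R -> Prop) (x : R) :
  filterlim f (within D (locally x)) (locally (f x)) ->
  forall eps, 0 < eps -> exists d, 0 < d /\ forall y, D y ->
    Rabs (y - x) < d -> Rabs (f y - f x) < eps.
Proof.
  intros H eps Heps.
  destruct (proj1 (filterlim_locally _ _) H (mkposreal eps Heps)) as [d Hd].
  exists d; split; [apply cond_pos|]. intros y Hy Hyx. exact (Hd y Hyx Hy).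
Qed.

Lemma cont2_within_subset (D D' : R -> R -> Prop) (f : R -> R -> R) (t x : R) :
  (forall t' x', D' t' x' -> D t' x') -> cont2_within D f t x -> cont2_within D' f t x.
Proof.
  intros HD H eps Heps. destruct (H eps Heps) as [d [Hd H1]].
  exists d; split; auto.
Qed.

Lemma cont2_within_lincomb (D : R -> R -> Prop) (f g : R -> R -> R) (s t x : R) :
  cont2_within D f t x -> cont2_within D g t x ->
  cont2_within D (fun a b => s * f a b - g a b) t x.
Proof.
  intros Hf Hg eps Heps.
  assert (Hs : 0 < Rabs s + 1) by (generalize (Rabs_pos s); lra).
  destruct (Hf (eps / 2 / (Rabs s + 1))) as [d1 [Hd1 H1]].
  { apply Rdiv_lt_0_compat; lra. }
  destruct (Hg (eps / 2)) as [d2 [Hd2 H2]]; [lra|].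
  exists (Rmin d1 d2); split; [apply Rmin_pos; auto|].
  intros t' x' HD Ht Hx.
  assert (F := H1 t' x' HD (Rlt_le_trans _ _ _ Ht (Rmin_l _ _))
                 (Rlt_le_trans _ _ _ Hx (Rmin_l _ _))).
  assert (G := H2 t' x' HD (Rlt_le_trans _ _ _ Ht (Rmin_r _ _))
                 (Rlt_le_trans _ _ _ Hx (Rmin_r _ _))).
  assert (Fs : Rabs s * Rabs (f t' x' - f t x) <= eps / 2).
  { apply Rle_trans with ((Rabs s + 1) * (eps / 2 / (Rabs s + 1))).
    - apply Rmult_le_compat; try apply Rabs_pos; lra.
    - right; field; lra. }
  replace (s * f t' x' - g t' x' - (s * f t x - g t x))
    with (s * (f t' x' - f t x) - (g t' x' - g t x)) by ring.
  eapply Rle_lt_trans; [apply Rabs_triang|].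
  rewrite Rabs_Ropp, Rabs_mult. lra.
Qed.

Lemma rect_unif_cont (a b c d : R) (f : R -> R -> R) :
  (forall t x, rect a b c d t x -> cont2_within (rect a b c d) f t x) ->
  forall eps, 0 < eps -> exists dd, 0 < dd /\ forall t x t' x',
    rect a b c d t x -> rect a b c d t' x' ->
    Rabs (t - t') < dd -> Rabs (x - x') < dd -> Rabs (f t x - f t' x') < eps.
Proof.
  intros Hf eps Heps.
  assert (Hloc : forall u w : R, exists r, 0 < r /\ (rect a b c d u w ->
     forall t x, rect a b c d t x -> Rabs (t - u) < 2 * r -> Rabs (x - w) < 2 * r ->
       Rabs (f t x - f u w) < eps / 2)).
  { intros u w. destruct (classic (rect a b c d u w)) as [Hr|Hr].
    - destruct (Hf u w Hr (eps / 2)) as [r [Hr0 H]]; [lra|].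
      exists (r / 2); split; [lra|]. intros _ t x Htx Ht Hx. apply H; auto; lra.
    - exists 1; split; [lra | tauto]. }
  pose (g u w := proj1_sig (constructive_indefinite_description _ (Hloc u w))).
  assert (Hg : forall u w, 0 < g u w /\ (rect a b c d u w ->
     forall t x, rect a b c d t x -> Rabs (t - u) < 2 * g u w -> Rabs (x - w) < 2 * g u w ->
       Rabs (f t x - f u w) < eps / 2))
    by (intros u w; exact (proj2_sig (constructive_indefinite_description _ (Hloc u w)))).
  clearbody g.
  destruct (compactness_value_2d a b c d (fun u w => mkposreal (g u w) (proj1 (Hg u w))))
    as [dd Hdd]; simpl in Hdd.
  exists dd; split; [apply cond_pos|].
  intros t x t' x' [Ht Hx] Hr' Htt Hxx.
  apply NNPP. intro Hn. apply (Hdd t x Ht Hx). intros [u [w [Hu [Hw [Hu1 [Hw1 Hdg]]]]]].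
  apply Hn. destruct (Hg u w) as [Hg0 Hgu].
  assert (A1 := Hgu (conj Hu Hw) t x (conj Ht Hx) ltac:(lra) ltac:(lra)).
  assert (A2 : Rabs (f t' x' - f u w) < eps / 2).
  { apply (Hgu (conj Hu Hw) t' x' Hr').
    - replace (t' - u) with ((t - u) - (t - t')) by ring.
      eapply Rle_lt_trans; [apply Rabs_triang|]. rewrite Rabs_Ropp. lra.
    - replace (x' - w) with ((x - w) - (x - x')) by ring.
      eapply Rle_lt_trans; [apply Rabs_triang|]. rewrite Rabs_Ropp. lra. }
  apply Rabs_def2 in A1. apply Rabs_def2 in A2. apply Rabs_def1; lra.
Qed.

(* Precomposing with [clamp a b] turns continuity relative to [a, b] into the two-sided
   continuity required by [continuity_ab_maj] and [Heine]. *)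
Definition clamp (a b x : R) : R := Rmax a (Rmin b x).

Lemma clamp_in (a b x : R) : a <= b -> a <= clamp a b x <= b.
Proof. intros; unfold clamp, Rmax, Rmin; repeat destruct Rle_dec; lra. Qed.

Lemma clamp_id (a b x : R) : a <= x <= b -> clamp a b x = x.
Proof. intros; unfold clamp, Rmax, Rmin; repeat destruct Rle_dec; lra. Qed.

Lemma clamp_lipschitz (a b x y : R) :
  a <= b -> Rabs (clamp a b x - clamp a b y) <= Rabs (x - y).
Proof.
  intros; unfold clamp, Rmax, Rmin; repeat destruct Rle_dec;
  unfold Rabs; repeat destruct Rcase_abs; lra.
Qed.

Lemma continuity_pt_clamp (f : R -> R) (a b x : R) :
  a <= b -> a <= x <= b ->
  (forall eps, 0 < eps -> exists d, 0 < d /\ forall y, a <= y <= b ->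
     Rabs (y - x) < d -> Rabs (f y - f x) < eps) ->
  continuity_pt (fun y => f (clamp a b y)) x.
Proof.
  intros Hab Hx Hf eps Heps. destruct (Hf eps Heps) as [d [Hd H]].
  exists d; split; [lra|]. intros y [_ Hy]. simpl in *; unfold R_dist in *.
  rewrite (clamp_id a b x Hx) in *. apply H; [apply clamp_in; auto|].
  rewrite <- (clamp_id a b x Hx). eapply Rle_lt_trans; [apply clamp_lipschitz|]; auto.
Qed.

Lemma rect_argmax (a b c d : R) (f : R -> R -> R) :
  a <= b -> c <= d ->
  (forall t x, rect a b c d t x -> cont2_within (rect a b c d) f t x) ->
  exists ta xa, rect a b c d ta xa /\ forall t x, rect a b c d t x -> f t x <= f ta xa.
Proof.
  intros Hab Hcd Hf.
  (* Maximise in x for each t, then maximise in t; the partial maximum is continuous because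
     f is uniformly continuous. *)
  assert (U := rect_unif_cont a b c d f Hf).
  assert (Hsec : forall t, exists xm, a <= t <= b ->
     c <= xm <= d /\ forall x, c <= x <= d -> f t x <= f t xm).
  { intros t. destruct (classic (a <= t <= b)) as [Ht|Ht]; [|exists c; tauto].
    destruct (continuity_ab_maj (fun x => f t (clamp c d x)) c d Hcd) as [xm [Hmax Hxm]].
    { intros z Hz. apply (continuity_pt_clamp (f t)); auto.
      intros eps Heps. destruct (U eps Heps) as [dd [Hdd Hu]].
      exists dd; split; auto. intros y Hy Hyz.
      apply Hu; try split; auto; rewrite ?Rminus_eq_0, ?Rabs_R0; auto. }
    exists (clamp c d xm). intros _. split; [apply clamp_in; auto|].
    intros x Hx. specialize (Hmax x Hx). rewrite clamp_id in Hmax; auto. }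
  destruct (choice _ Hsec) as [xm Hxm].
  destruct (continuity_ab_maj (fun t => f (clamp a b t) (xm (clamp a b t))) a b Hab)
    as [ta [Hmax Hta]].
  { intros s Hs. apply (continuity_pt_clamp (fun t => f t (xm t))); auto.
    intros eps Heps. destruct (U (eps / 2)) as [dd [Hdd Hu]]; [lra|].
    exists dd; split; auto. intros t Ht Hst.
    destruct (Hxm s Hs) as [Hs1 Hs2]. destruct (Hxm t Ht) as [Ht1 Ht2].
    assert (E1 : Rabs (f t (xm s) - f s (xm s)) < eps / 2)
      by (apply Hu; try split; auto; rewrite ?Rminus_eq_0, ?Rabs_R0; auto).
    assert (E2 : Rabs (f t (xm t) - f s (xm t)) < eps / 2)
      by (apply Hu; try split; auto; rewrite ?Rminus_eq_0, ?Rabs_R0; auto).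
    specialize (Hs2 (xm t) Ht1). specialize (Ht2 (xm s) Hs1).
    apply Rabs_def2 in E1. apply Rabs_def2 in E2. apply Rabs_def1; lra. }
  rewrite (clamp_id a b ta Hta) in Hmax.
  exists ta, (xm ta). destruct (Hxm ta Hta) as [Hxa _].
  split; [split; auto|].
  intros t x [Ht Hx]. specialize (Hmax t Ht). rewrite (clamp_id a b t Ht) in Hmax.
  destruct (Hxm t Ht) as [_ H]. specialize (H x Hx). lra.
Qed.

(** * Maximum principle and barriers *)

Lemma is_derive_pos_locally_incr (f : R -> R) (c l : R) :
  is_derive f c l -> 0 < l ->
  exists d, 0 < d /\ forall h, 0 < h < d -> f (c - h) < f c /\ f c < f (c + h).
Proof.
  intros Hf Hl. apply is_derive_Reals in Hf.
  destruct (Hf (l / 2)) as [d Hd]; [lra|].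
  assert (Hquot : forall h, h <> 0 -> Rabs h < d -> 0 < (f (c + h) - f c) / h).
  { intros h Hh Hhd. specialize (Hd h Hh Hhd). apply Rabs_def2 in Hd. lra. }
  exists d; split; [apply cond_pos|]. intros h Hh.
  assert (Q1 := Hquot h ltac:(lra) ltac:(rewrite Rabs_pos_eq; lra)).
  assert (Q2 := Hquot (- h) ltac:(lra) ltac:(rewrite Rabs_Ropp, Rabs_pos_eq; lra)).
  replace (c + - h) with (c - h) in Q2 by ring.
  unfold Rdiv in Q1, Q2. rewrite Rinv_opp in Q2.
  assert (0 < / h) by (apply Rinv_0_lt_compat; lra).
  split; nra.
Qed.

Lemma is_derive_nonneg_of_left_max (f : R -> R) (c l d : R) :
  is_derive f c l -> 0 < d -> (forall y, c - d < y <= c -> f y <= f c) -> 0 <= l.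
Proof.
  intros Hf Hd Hmax. apply Rnot_lt_le. intro Hl.
  destruct (is_derive_pos_locally_incr (fun y => - f y) c (- l)) as [d' [Hd' Hdecr]];
    [apply (is_derive_opp f c l Hf) | lra |].
  set (h := Rmin d d' / 2).
  assert (0 < h < d /\ h < d') by (unfold h, Rmin; destruct Rle_dec; lra).
  destruct (Hdecr h) as [H1 _]; [lra|].
  specialize (Hmax (c - h) ltac:(lra)). lra.
Qed.

Lemma is_derive_eq0_of_local_max (f : R -> R) (c l d : R) :
  is_derive f c l -> 0 < d -> (forall y, Rabs (y - c) < d -> f y <= f c) -> l = 0.
Proof.
  intros Hf Hd Hmax.
  assert (Hl0 : 0 <= l).
  { apply (is_derive_nonneg_of_left_max f c l d Hf Hd). intros y Hy. apply Hmax.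
    apply Rabs_def1; lra. }
  apply Rle_antisym; auto. apply Rnot_lt_le. intro Hl.
  destruct (is_derive_pos_locally_incr f c l Hf Hl) as [d' [Hd' Hincr]].
  set (h := Rmin d d' / 2).
  assert (0 < h < d /\ h < d') by (unfold h, Rmin; destruct Rle_dec; lra).
  destruct (Hincr h) as [_ H2]; [lra|].
  specialize (Hmax (c + h)). rewrite Rabs_pos_eq in Hmax by lra. specialize (Hmax ltac:(lra)).
  lra.
Qed.

Lemma is_derive2_nonpos_of_local_max (f f' : R -> R) (c l d : R) :
  0 < d -> (forall y, Rabs (y - c) < d -> is_derive f y (f' y)) -> is_derive f' c l ->
  (forall y, Rabs (y - c) < d -> f y <= f c) -> l <= 0.
Proof.
  intros Hd Hf Hf' Hmax.
  assert (Hc : f' c = 0).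
  { apply (is_derive_eq0_of_local_max f c _ d); auto. apply Hf.
    rewrite Rminus_eq_0, Rabs_R0; lra. }
  apply Rnot_lt_le. intro Hl.
  destruct (is_derive_pos_locally_incr f' c l Hf' Hl) as [d' [Hd' Hincr]].
  set (h := Rmin d d' / 2).
  assert (0 < h < d /\ h < d') by (unfold h, Rmin; destruct Rle_dec; lra).
  destruct (MVT_cor2 f f' c (c + h)) as [xi [Hxi1 Hxi2]]; [lra| |].
  { intros y Hy. apply is_derive_Reals, Hf. apply Rabs_def1; lra. }
  destruct (Hincr (xi - c)) as [_ Hpos]; [lra|].
  replace (c + (xi - c)) with xi in Hpos by ring.
  specialize (Hmax (c + h)). rewrite Rabs_pos_eq in Hmax by lra. specialize (Hmax ltac:(lra)).
  nra.
Qed.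

Lemma parabolic_max_principle (rho mu sigma t1 R0 : R) (w wt wx wxx : R -> R -> R) :
  0 < rho -> 0 < t1 -> 0 < R0 ->
  (forall t x, rect 0 t1 0 R0 t x -> cont2_within (rect 0 t1 0 R0) w t x) ->
  (forall t x, 0 < t <= t1 -> 0 < x < R0 -> is_derive (fun s => w s x) t (wt t x)) ->
  (forall t x, 0 < t <= t1 -> 0 < x < R0 -> is_derive (fun y => w t y) x (wx t x)) ->
  (forall t x, 0 < t <= t1 -> 0 < x < R0 -> is_derive (fun y => wx t y) x (wxx t x)) ->
  (forall t x, 0 < t <= t1 -> 0 < x < R0 ->
     rho * w t x + wt t x - mu * wx t x - / 2 * sigma ^ 2 * wxx t x <= 0) ->
  (forall x, 0 <= x <= R0 -> w 0 x <= 0) ->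
  (forall t, 0 <= t <= t1 -> w t 0 <= 0) ->
  (forall t, 0 <= t <= t1 -> w t R0 <= 0) ->
  forall t x, rect 0 t1 0 R0 t x -> w t x <= 0.
Proof.
  intros Hrho Ht1 HR0 Hw Hwt Hwx Hwxx Hsub Hinit Hleft Hright t x Htx.
  apply Rnot_lt_le. intro Hpos.
  destruct (rect_argmax 0 t1 0 R0 w ltac:(lra) ltac:(lra) Hw)
    as [ta [xa [[Hta Hxa] Hmax]]].
  assert (Hwa : 0 < w ta xa) by (specialize (Hmax t x Htx); lra).
  assert (Hta' : 0 < ta <= t1).
  { split; [|lra]. destruct (Req_dec ta 0) as [E|E]; [|lra].
    subst ta. specialize (Hinit xa Hxa). lra. }
  assert (Hxa' : 0 < xa < R0).
  { destruct (Req_dec xa 0) as [E|E]; [subst xa; specialize (Hleft ta Hta); lra|].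
    destruct (Req_dec xa R0) as [E'|E']; [subst xa; specialize (Hright ta Hta); lra|].
    lra. }
  set (d := Rmin xa (R0 - xa)).
  assert (Hd : 0 < d /\ d <= xa /\ d <= R0 - xa) by (unfold d, Rmin; destruct Rle_dec; lra).
  assert (Hnear : forall y, Rabs (y - xa) < d -> 0 < y < R0)
    by (intros y Hy; apply Rabs_def2 in Hy; lra).
  assert (Hmax_x : forall y, Rabs (y - xa) < d -> w ta y <= w ta xa)
    by (intros y Hy; apply Hmax; specialize (Hnear y Hy); split; lra).
  assert (Ex : wx ta xa = 0)
    by (apply (is_derive_eq0_of_local_max (fun y => w ta y) xa _ d); auto; lra).
  assert (Et : 0 <= wt ta xa).
  { apply (is_derive_nonneg_of_left_max (fun s => w s xa) ta _ ta); auto; [lra|].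
    intros s Hs. apply Hmax. split; lra. }
  assert (Exx : wxx ta xa <= 0).
  { apply (is_derive2_nonpos_of_local_max (fun y => w ta y) (wx ta) xa _ d); auto; lra. }
  specialize (Hsub ta xa Hta' Hxa'). rewrite Ex in Hsub.
  assert (0 <= sigma ^ 2) by apply pow2_ge_0.
  nra.
Qed.

Lemma exp_monotone (x y : R) : x <= y -> exp x <= exp y.
Proof. intros [H|<-]; [left; apply exp_increasing, H | apply Rle_refl]. Qed.

Lemma exp_rho_cancel (rho t y : R) : exp (rho * t) * (exp (- rho * t) * y) = y.
Proof.
  rewrite <- Rmult_assoc, <- exp_plus. replace (rho * t + - rho * t) with 0 by ring.
  rewrite exp_0. ring.
Qed.

Lemma discounted_loss_le (rho t c e : R) :
  (exp (rho * t) - 1) * c <= e -> (1 - exp (- rho * t)) * c <= exp (- rho * t) * e.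
Proof.
  intros H.
  assert (HQ : exp (- rho * t) * exp (rho * t) = 1)
    by (rewrite <- exp_plus; replace (- rho * t + rho * t) with 0 by ring; apply exp_0).
  replace ((1 - exp (- rho * t)) * c) with (exp (- rho * t) * ((exp (rho * t) - 1) * c))
    by (transitivity (exp (- rho * t) * exp (rho * t) * c - exp (- rho * t) * c);
        [ring | rewrite HQ; ring]).
  apply Rmult_le_compat_l; [left; apply exp_pos | exact H].
Qed.

Lemma exp_opp_add_le_half (a b : R) : 4 <= a -> exp b <= 2 -> exp (- a + b) <= / 2.
Proof.
  intros Ha Hb. rewrite exp_plus, exp_Ropp.
  assert (H4 : 5 <= exp a)
    by (apply Rle_trans with (exp 4); [generalize (exp_ineq1_le 4); lra | apply exp_monotone, Ha]).
  assert (0 < exp b) by apply exp_pos.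
  apply Rle_trans with (/ 5 * 2); [apply Rmult_le_compat; try lra | lra].
  - left. apply Rinv_0_lt_compat. lra.
  - apply Rinv_le_contravar; lra.
Qed.

Definition heat_op (mu sigma rho : R) (u : R -> R -> R) (t x : R) : R :=
  rho * u t x + Derive (fun s => u s x) t - mu * Derive (fun y => u t y) x
  - / 2 * sigma ^ 2 * Derive (fun y => Derive (fun z => u t z) y) x.

Definition barrier (rho mu sigma a C D x0 lam : R) (t x : R) : R :=
  exp (- rho * t) * (a + C * exp t * ((x - x0) ^ 2 + (sigma ^ 2 + mu ^ 2) * t)
                     + D * exp (- lam * x + sigma ^ 2 * lam ^ 2 / 2 * t)).

Lemma continuous2_plus (f g : R * R -> R) (p : R * R) :
  continuous f p -> continuous g p -> continuous (fun q => f q + g q) p.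
Proof. apply (continuous_plus f g). Qed.

Lemma continuous2_minus (f g : R * R -> R) (p : R * R) :
  continuous f p -> continuous g p -> continuous (fun q => f q - g q) p.
Proof. apply (continuous_minus f g). Qed.

Lemma continuous2_mult (f g : R * R -> R) (p : R * R) :
  continuous f p -> continuous g p -> continuous (fun q => f q * g q) p.
Proof. apply (continuous_mult f g). Qed.

Lemma continuous2_opp (f : R * R -> R) (p : R * R) :
  continuous f p -> continuous (fun q => - f q) p.
Proof. apply (continuous_opp f). Qed.

Lemma continuous2_exp (f : R * R -> R) (p : R * R) :
  continuous f p -> continuous (fun q => exp (f q)) p.
Proof. intros H. apply (continuous_comp f exp); [exact H | apply continuous_exp]. Qed.

Lemma continuous2_pow (f : R * R -> R) (n : nat) (p : R * R) :
  continuous f p -> continuous (fun q => f q ^ n) p.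
Proof.
  intros H. induction n as [|n IH]; simpl; [apply continuous_const|].
  apply (continuous2_mult f (fun q => f q ^ n)); auto.
Qed.

Ltac continuity2 :=
  lazymatch goal with
  | |- continuous (fun q => fst q) (?t, ?x) => apply continuous_fst
  | |- continuous (fun q => snd q) (?t, ?x) => apply continuous_snd
  | |- continuous (fun q => @?f q + @?g q) _ => apply (continuous2_plus f g); continuity2
  | |- continuous (fun q => @?f q - @?g q) _ => apply (continuous2_minus f g); continuity2
  | |- continuous (fun q => @?f q * @?g q) _ => apply (continuous2_mult f g); continuity2
  | |- continuous (fun q => - @?f q) _ => apply (continuous2_opp f); continuity2
  | |- continuous (fun q => exp (@?f q)) _ => apply (continuous2_exp f); continuity2
  | |- continuous (fun q => @?f q ^ _) _ => apply (continuous2_pow f); continuity2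
  | |- continuous (fun q => _) _ => apply continuous_const
  end.

Lemma barrier_continuous (rho mu sigma a C D x0 lam t x : R) :
  continuous (fun p : R * R => barrier rho mu sigma a C D x0 lam (fst p) (snd p)) (t, x).
Proof. unfold barrier. continuity2. Qed.

Lemma barrier_at_0 (rho mu sigma a C D x0 lam x : R) :
  barrier rho mu sigma a C D x0 lam 0 x = a + C * (x - x0) ^ 2 + D * exp (- lam * x).
Proof.
  unfold barrier. rewrite !Rmult_0_r, !Rplus_0_r, exp_0. ring.
Qed.

Lemma barrier_at_center (rho mu sigma a C D x0 lam t : R) :
  barrier rho mu sigma a C D x0 lam t x0 =
  exp (- rho * t) * (a + C * exp t * ((sigma ^ 2 + mu ^ 2) * t)
                     + D * exp (- lam * x0 + sigma ^ 2 * lam ^ 2 / 2 * t)).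
Proof. unfold barrier. ring. Qed.

Lemma barrier_ge_discounted_initial (rho mu sigma a C D x0 lam t x : R) :
  0 <= C -> 0 <= D -> 0 <= t ->
  exp (- rho * t) * barrier rho mu sigma a C D x0 lam 0 x <= barrier rho mu sigma a C D x0 lam t x.
Proof.
  intros HC HD Ht. rewrite barrier_at_0. unfold barrier.
  apply Rmult_le_compat_l; [left; apply exp_pos|].
  assert (1 <= exp t) by (rewrite <- exp_0; apply exp_monotone, Ht).
  assert (0 <= (sigma ^ 2 + mu ^ 2) * t)
    by (apply Rmult_le_pos; [generalize (pow2_ge_0 sigma) (pow2_ge_0 mu); lra | exact Ht]).
  assert (0 <= (x - x0) ^ 2) by apply pow2_ge_0.
  assert (0 <= sigma ^ 2 * lam ^ 2) by (apply Rmult_le_pos; apply pow2_ge_0).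
  assert (C * (x - x0) ^ 2 <= C * exp t * ((x - x0) ^ 2 + (sigma ^ 2 + mu ^ 2) * t)).
  { rewrite Rmult_assoc. apply Rmult_le_compat_l; [lra | nra]. }
  assert (D * exp (- lam * x) <= D * exp (- lam * x + sigma ^ 2 * lam ^ 2 / 2 * t)).
  { apply Rmult_le_compat_l, exp_monotone; [lra | nra]. }
  lra.
Qed.

Section Barrier.
Variables (rho mu sigma a C D x0 lam : R).
Let g := barrier rho mu sigma a C D x0 lam.
Let kap := sigma ^ 2 + mu ^ 2.
Let gam := sigma ^ 2 * lam ^ 2 / 2.
Let gx (t x : R) := exp (- rho * t) * (C * exp t * (2 * (x - x0)) - D * lam * exp (- lam * x + gam * t)).

Lemma barrier_is_derive_t (t x : R) :
  is_derive (fun s => g s x) t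
    (- rho * g t x + exp (- rho * t) * (C * exp t * ((x - x0) ^ 2 + kap * t + kap)
                                        + D * gam * exp (- lam * x + gam * t))).
Proof. unfold g, barrier; fold kap gam. auto_derive; auto. ring. Qed.

Lemma barrier_is_derive_x (t x : R) : is_derive (fun y => g t y) x (gx t x).
Proof. unfold g, gx, barrier; fold kap gam. auto_derive; auto. ring. Qed.

Lemma barrier_is_derive_xx (t x : R) :
  is_derive (fun y => Derive (fun z => g t z) y) x
    (exp (- rho * t) * (C * exp t * 2 + D * lam ^ 2 * exp (- lam * x + gam * t))).
Proof.
  apply (is_derive_ext (gx t)).
  { intros y. symmetry. apply is_derive_unique, barrier_is_derive_x. }
  unfold gx. auto_derive; auto. ring.
Qed.

Hypotheses (hmu : 0 <= mu) (hC : 0 <= C) (hD : 0 <= D) (hlam : 0 <= lam).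

(* heat_op g = e^{-rho t} (C e^t ((x - x0 - mu)^2 + kap t) + D mu lam e^{-lam x + gam t}):
   kap and gam are chosen so that every other term cancels. *)
Lemma barrier_supersolution (t x : R) : 0 <= t -> 0 <= heat_op mu sigma rho g t x.
Proof.
  intros Ht.
  assert (Et := is_derive_unique _ _ _ (barrier_is_derive_t t x)).
  assert (Ex := is_derive_unique _ _ _ (barrier_is_derive_x t x)).
  assert (Exx := is_derive_unique _ _ _ (barrier_is_derive_xx t x)).
  unfold heat_op; simpl in Et, Ex, Exx; rewrite Et, Ex, Exx; unfold gx.
  replace (rho * g t x + _ - _ - _) with
    (exp (- rho * t) * (C * exp t * ((x - x0 - mu) ^ 2 + kap * t)
                        + D * mu * lam * exp (- lam * x + gam * t)))
    by (unfold kap, gam; field).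
  assert (0 < exp (- rho * t)) by apply exp_pos.
  assert (0 < exp t) by apply exp_pos.
  assert (0 < exp (- lam * x + gam * t)) by apply exp_pos.
  assert (0 <= (x - x0 - mu) ^ 2) by apply pow2_ge_0.
  assert (0 <= kap) by (unfold kap; assert (0 <= sigma ^ 2) by apply pow2_ge_0; nra).
  apply Rmult_le_pos; [lra|]. apply Rplus_le_le_0_compat.
  - apply Rmult_le_pos; [apply Rmult_le_pos; lra|]. nra.
  - apply Rmult_le_pos; [|lra]. apply Rmult_le_pos; [apply Rmult_le_pos|]; lra.
Qed.
End Barrier.

Lemma is_derive_lincomb (f g : R -> R) (s x df dg : R) :
  is_derive f x df -> is_derive g x dg -> is_derive (fun z => s * f z - g z) x (s * df - dg).
Proof.
  intros Hf Hg. apply (is_derive_minus (fun z => s * f z) g); auto.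
  apply (is_derive_scal f x s df Hf).
Qed.

Lemma barrier_comparison (mu sigma rho T : R) (u : R -> R -> R) (s a C D x0 lam t1 R0 : R) :
  0 < rho -> 0 <= mu -> 0 <= C -> 0 <= D -> 0 <= lam -> 0 < t1 < T -> 0 < R0 ->
  smooth_on_Q T u -> cont_on_Qbar T u ->
  (forall t x, inQ T t x -> heat_op mu sigma rho u t x = 0) ->
  (forall x, 0 <= x <= R0 -> s * u 0 x <= barrier rho mu sigma a C D x0 lam 0 x) ->
  (forall t, 0 <= t <= t1 -> s * u t 0 <= barrier rho mu sigma a C D x0 lam t 0) ->
  (forall t, 0 <= t <= t1 -> s * u t R0 <= barrier rho mu sigma a C D x0 lam t R0) ->
  forall t x, 0 <= t <= t1 -> 0 <= x <= R0 -> s * u t x <= barrier rho mu sigma a C D x0 lam t x.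
Proof.
  intros Hrho Hmu HC HD Hlam Ht1 HR0 Hsmooth Hcont Hpde Hinit Hleft Hright t x Ht Hx.
  set (g := barrier rho mu sigma a C D x0 lam) in *.
  (* heat_op is linear, so s * u is again a solution for every real s. *)
  assert (Hu : forall t x, 0 < t <= t1 -> 0 < x < R0 ->
    ex_derive (fun r => u r x) t /\ ex_derive (fun y => u t y) x /\
    ex_derive (fun y => Derive (fun z => u t z) y) x).
  { intros t' x' Ht' Hx'. assert (HQ : inQ T t' x') by (split; lra).
    destruct (Hsmooth nil t' x' HQ) as [_ [H1 H2]].
    destruct (Hsmooth (cons false nil) t' x' HQ) as [_ [_ H3]]. auto. }
  cut (s * u t x - g t x <= 0); [lra|].
  apply (parabolic_max_principle rho mu sigma t1 R0 (fun t x => s * u t x - g t x)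
    (fun t x => s * Derive (fun r => u r x) t - Derive (fun r => g r x) t)
    (fun t x => s * Derive (fun y => u t y) x - Derive (fun y => g t y) x)
    (fun t x => s * Derive (fun y => Derive (fun z => u t z) y) x
                - Derive (fun y => Derive (fun z => g t z) y) x)); try lra.
  - intros t' x' [Ht' Hx']. apply cont2_within_lincomb.
    + apply (cont2_within_subset (inQbar T)); [intros ? ? [? ?]; split; lra|].
      apply cont2_within_of_filterlim, Hcont. split; lra.
    + apply cont2_within_of_continuous, barrier_continuous.
  - intros t' x' Ht' Hx'. apply is_derive_lincomb.
    + apply Derive_correct, (Hu t' x' Ht' Hx').
    + apply Derive_correct. eexists. apply barrier_is_derive_t.
  - intros t' x' Ht' Hx'. apply is_derive_lincomb.
    + apply Derive_correct, (Hu t' x' Ht' Hx').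
    + apply Derive_correct. eexists. apply barrier_is_derive_x.
  - intros t' x' Ht' Hx'. apply is_derive_lincomb.
    + apply Derive_correct, (Hu t' x' Ht' Hx').
    + apply Derive_correct. eexists. apply barrier_is_derive_xx.
  - intros t' x' Ht' Hx'.
    assert (Hg := barrier_supersolution rho mu sigma a C D x0 lam Hmu HC HD Hlam t' x' ltac:(lra)).
    replace (rho * _ + _ - _ - _)
      with (s * heat_op mu sigma rho u t' x' - heat_op mu sigma rho g t' x')
      by (unfold heat_op; ring).
    rewrite (Hpde t' x') by (split; lra). fold g in Hg. lra.
  - intros x' Hx'. specialize (Hinit x' Hx'). lra.
  - intros t' Ht'. specialize (Hleft t' Ht'). lra.
  - intros t' Ht'. specialize (Hright t' Ht'). lra.
  - split; lra.
Qed.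

(** * The class C_A and the intervention operator *)

Lemma cost_pos (lf lp z : R) : 0 < z -> cost lf lp z = lf + (1 + lp) * z.
Proof. intros; unfold cost; destruct Rlt_dec; lra. Qed.

Section BoundaryValue.
Variables (lf lp : R) (psi : R -> R) (y : R).
Hypothesis hy : Finite y = rbar_pos (Iop lf lp psi 0).

Let E := fun r => exists z, 0 < z /\ r = psi (0 + z) - cost lf lp z.

Lemma Iop0_pos_ub (z : R) : 0 < z -> psi z - cost lf lp z <= y.
Proof.
  intros Hz. destruct (Lub_Rbar_correct E) as [Hub _].
  assert (Hz' := Hub (psi (0 + z) - cost lf lp z) (ex_intro _ z (conj Hz eq_refl))).
  rewrite Rplus_0_l in Hz'.
  unfold Iop in hy; fold E in hy.
  destruct (Lub_Rbar E) as [l| |]; simpl in hy, Hz'; try discriminate; try contradiction.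
  injection hy as ->. eapply Rle_trans; [exact Hz' | apply Rmax_l].
Qed.

Lemma Iop0_pos_least (K : R) :
  0 <= K -> (forall z, 0 < z -> psi z - cost lf lp z <= K) -> y <= K.
Proof.
  intros HK Hjump. destruct (Lub_Rbar_correct E) as [_ Hlub].
  assert (Hl : Rbar_le (Lub_Rbar E) K).
  { apply Hlub. intros r [z [Hz ->]]. rewrite Rplus_0_l. apply Hjump, Hz. }
  unfold Iop in hy; fold E in hy.
  destruct (Lub_Rbar E) as [l| |]; simpl in hy, Hl; try discriminate; try contradiction.
  - injection hy as ->. apply Rmax_lub; auto.
  - injection hy as ->. auto.
Qed.

Lemma Iop0_pos_approx (eta : R) :
  0 < y -> 0 < eta -> exists z, 0 < z /\ y - eta < psi z - cost lf lp z.
Proof.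
  intros Hy Heta. apply NNPP. intro Hn. destruct (Lub_Rbar_correct E) as [_ Hlub].
  assert (Hl : Rbar_le (Lub_Rbar E) (y - eta)).
  { apply Hlub. intros r [z [Hz ->]]. rewrite Rplus_0_l. apply Rnot_lt_le. intro Hr.
    apply Hn. exists z. auto. }
  unfold Iop in hy; fold E in hy.
  destruct (Lub_Rbar E) as [l| |]; simpl in hy, Hl; try discriminate; try contradiction.
  - injection hy as ->. unfold Rmax in *. destruct Rle_dec; lra.
  - injection hy as ->. lra.
Qed.
End BoundaryValue.

Lemma nondecreasing_bounded_tail (g : R -> R) (A : R) :
  (forall x y, 0 <= x -> x <= y -> g x <= g y) -> (forall x, 0 <= x -> 0 <= g x <= A) ->
  forall e, 0 < e -> exists X, 0 <= X /\ forall y, X <= y -> g y <= g X + e.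
Proof.
  intros Hmon Hb e He. apply NNPP. intro Hn.
  assert (Hgrow : forall k : nat, exists X, 0 <= X /\ INR k * e <= g X).
  { induction k as [|k [X [HX HgX]]].
    - exists 0. specialize (Hb 0 (Rle_refl 0)). simpl. lra.
    - destruct (not_all_ex_not _ _ (fun H => Hn (ex_intro _ X (conj HX H)))) as [y Hy].
      apply imply_to_and in Hy. destruct Hy as [Hy1 Hy2].
      exists y. rewrite S_INR. lra. }
  destruct (INR_archimed e A He) as [k Hk].
  destruct (Hgrow k) as [X [HX HgX]]. specialize (Hb X HX). lra.
Qed.

Section InCA.
Variables (lf lp A : R) (phi : R -> R).
Hypothesis hphi : in_CA lf lp A phi.

Lemma in_CA_unif_cont (e : R) :
  0 < e -> exists d, 0 < d /\ forall x y, 0 <= x -> 0 <= y -> Rabs (y - x) < d ->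
    Rabs (phi y - phi x) <= e.
Proof.
  intros He. destruct hphi as [Hc [_ [_ [_ [_ [Hg Hb]]]]]].
  destruct (nondecreasing_bounded_tail (fun x => phi x - x) A Hg Hb (e / 2)) as [X [HX Htail]];
    [lra|].
  destruct (Heine (fun y => phi (clamp 0 (X + 1) y)) (fun c => 0 <= c <= X + 1)
              (compact_P3 0 (X + 1))) with (eps := mkposreal e He) as [d Hd].
  { intros x Hx. apply continuity_pt_clamp; [lra | auto |].
    intros eps Heps. destruct (cont_within_eps_delta phi _ x (Hc x ltac:(lra)) eps Heps)
      as [d [Hd H]].
    exists d; split; auto. intros y Hy. apply H; lra. }
  simpl in Hd.
  exists (Rmin d (Rmin 1 (e / 2))); split.
  { apply Rmin_pos; [apply cond_pos | apply Rmin_pos; lra]. }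
  intros x y Hx Hy Hxy.
  assert (Hxy1 : Rabs (y - x) < d) by (eapply Rlt_le_trans; [exact Hxy | apply Rmin_l]).
  assert (Hxy2 : Rabs (y - x) < Rmin 1 (e / 2))
    by (eapply Rlt_le_trans; [exact Hxy | apply Rmin_r]).
  assert (Hxy3 := Rlt_le_trans _ _ _ Hxy2 (Rmin_l _ _)).
  assert (Hxy4 := Rlt_le_trans _ _ _ Hxy2 (Rmin_r _ _)).
  apply Rabs_def2 in Hxy3. apply Rabs_def2 in Hxy4.
  destruct (classic (x <= X + 1 /\ y <= X + 1)) as [[h1 h2]|h].
  - left. rewrite Rabs_minus_sym.
    specialize (Hd x y ltac:(lra) ltac:(lra)). rewrite Rabs_minus_sym in Hd.
    rewrite !clamp_id in Hd by lra. apply Hd, Hxy1.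
  - assert (HXx : X <= x /\ X <= y) by (apply not_and_or in h; destruct h; lra).
    specialize (Htail x ltac:(lra)) as T1. specialize (Htail y ltac:(lra)) as T2.
    assert (M1 := Hg X x HX ltac:(lra)). assert (M2 := Hg X y HX ltac:(lra)).
    apply Rabs_le; lra.
Qed.

Lemma in_CA_quadratic_envelope (e : R) :
  0 < e -> exists C, 0 < C /\ forall x y, 0 <= x -> 0 <= y ->
    Rabs (phi y - phi x) <= e + C * (y - x) ^ 2.
Proof.
  intros He. destruct (in_CA_unif_cont e He) as [d [Hd Hu]].
  destruct hphi as [_ [_ [_ [_ [_ [_ Hb]]]]]].
  assert (HA : 0 <= A) by (specialize (Hb 0 (Rle_refl 0)); lra).
  assert (Hd1 : 0 < / d) by (apply Rinv_0_lt_compat, Hd).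
  exists (/ d + A / (d * d)). split.
  { assert (0 <= A / (d * d)) by (apply Rdiv_le_0_compat; nra). lra. }
  intros x y Hx Hy.
  assert (Hsq : 0 <= (/ d + A / (d * d)) * (y - x) ^ 2).
  { apply Rmult_le_pos; [|apply pow2_ge_0].
    assert (0 <= A / (d * d)) by (apply Rdiv_le_0_compat; nra). lra. }
  destruct (Rlt_or_le (Rabs (y - x)) d) as [Hnear|Hfar].
  - specialize (Hu x y Hx Hy Hnear). lra.
  - assert (Hlin : Rabs (phi y - phi x) <= Rabs (y - x) + A).
    { specialize (Hb x Hx) as B1. specialize (Hb y Hy) as B2. apply Rabs_le.
      unfold Rabs; destruct Rcase_abs; lra. }
    replace ((y - x) ^ 2) with (Rabs (y - x) * Rabs (y - x))
      by (rewrite <- Rabs_mult, Rabs_pos_eq; [ring | apply Rle_0_sqr]).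
    set (r := Rabs (y - x)) in *.
    assert (Hq : 1 <= r / d) by (apply (Rmult_le_reg_r d); [lra|]; field_simplify; lra).
    replace ((/ d + A / (d * d)) * (r * r)) with (r * (r / d) + A * ((r / d) * (r / d)))
      by (field; apply Rgt_not_eq, Hd).
    assert (r <= r * (r / d)) by nra.
    assert (1 <= (r / d) * (r / d)) by nra.
    assert (A <= A * ((r / d) * (r / d))) by nra.
    lra.
Qed.

Lemma in_CA_jump_le (z : R) : 0 < z -> phi z - cost lf lp z <= phi 0.
Proof.
  intros Hz. destruct hphi as [_ [_ [_ [_ [H0 _]]]]].
  exact (Iop0_pos_ub lf lp phi (phi 0) H0 z Hz).
Qed.

Lemma in_CA_near_optimal_jump :
  0 < lf -> 0 < lp -> exists lam Zc, 0 < lam /\ forall z, 0 < z ->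
    phi 0 - lf / 2 < phi z - cost lf lp z -> 4 <= lam * z /\ cost lf lp z <= Zc.
Proof.
  intros Hlf Hlp. destruct hphi as [Hc [_ [_ [_ [_ [_ Hb]]]]]].
  destruct (cont_within_eps_delta phi _ 0 (Hc 0 (Rle_refl 0)) (lf / 2)) as [d0 [Hd0 Hnear]];
    [lra|].
  exists (4 / d0), (lf + (1 + lp) * (A / lp)). split; [apply Rdiv_lt_0_compat; lra|].
  intros z Hz Hjump. rewrite (cost_pos lf lp z Hz) in *.
  assert (Hd0z : d0 <= z).
  { apply Rnot_lt_le. intro Hzd.
    specialize (Hnear z ltac:(lra) ltac:(rewrite Rminus_0_r, Rabs_pos_eq; lra)).
    apply Rabs_def2 in Hnear. nra. }
  assert (Hlz : z <= A / lp).
  { apply Rle_div_r; [lra|].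
    specialize (Hb z ltac:(lra)) as Bz. specialize (Hb 0 (Rle_refl 0)) as B0. nra. }
  split.
  - apply Rle_trans with (4 / d0 * d0); [right; field; lra|].
    apply Rmult_le_compat_l; [apply Rlt_le, Rdiv_lt_0_compat|]; lra.
  - nra.
Qed.
End InCA.

(** * Estimates for the sequence v_n *)

Lemma locally_lt_of_derivable (g : R -> R) (x b : R) :
  ex_derive g x -> g x < b -> locally x (fun t => g t < b).
Proof.
  intros Hg Hb. exact (ex_derive_continuous g x Hg _ (open_lt b (g x) Hb)).
Qed.

Lemma locally_0_initial_interval (P : R -> Prop) :
  locally 0 P -> exists t1, 0 < t1 /\ forall t, 0 <= t <= t1 -> P t.
Proof.
  intros [d Hd]. assert (Hd0 := cond_pos d).
  exists (d / 2). split; [lra|]. intros t Ht. apply Hd, ball_R.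
  rewrite Rminus_0_r, Rabs_pos_eq; lra.
Qed.

Section UniformEstimate.
Variables (mu sigma rho T lf lp A : R) (phi : R -> R) (v : nat -> R -> R -> R).
Hypotheses (hmu : 0 < mu) (hrho : 0 < rho) (hT : 0 < T) (hlf : 0 < lf) (hlp : 0 < lp)
  (hphi : in_CA lf lp A phi)
  (hsmooth : forall n, (1 <= n)%nat -> smooth_on_Q T (v n))
  (hcont : forall n, (1 <= n)%nat -> cont_on_Qbar T (v n))
  (hpde : forall n, (1 <= n)%nat -> forall t x, inQ T t x -> heat_op mu sigma rho (v n) t x = 0)
  (hinit : forall n, (1 <= n)%nat -> forall x, 0 <= x -> v n 0 x = phi x)
  (hbdry : forall n, (1 <= n)%nat -> forall t, 0 <= t <= T ->
     Finite (v n t 0) = rbar_pos (Iop lf lp (fun y => v (n - 1)%nat t y) 0))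
  (hbounds : forall n, (1 <= n)%nat -> forall t x, inQbar T t x ->
     exp (- rho * t) * x <= v n t x <= exp (- rho * t) * (x + A + mu * t)).

Section Tolerance.
Variables (e C lam Zc t1 : R).
Hypotheses (he : 0 < e) (hC : 0 < C) (hlam : 0 <= lam) (ht1 : 0 < t1 < T)
  (henv : forall x y, 0 <= x -> 0 <= y -> Rabs (phi y - phi x) <= e + C * (y - x) ^ 2)
  (hjump : forall z, 0 < z -> phi 0 - e < phi z - cost lf lp z ->
     4 <= lam * z /\ cost lf lp z <= Zc)
  (hv1 : forall t, 0 <= t <= t1 -> Rabs (v 1 t 0 - phi 0) < e / 2)
  (herr : forall t, 0 <= t <= t1 -> C * exp t * ((sigma ^ 2 + mu ^ 2) * t) <= e)
  (hgam : forall t, 0 <= t <= t1 -> exp (sigma ^ 2 * lam ^ 2 / 2 * t) <= 2)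
  (hZc : forall t, 0 <= t <= t1 -> (exp (rho * t) - 1) * Zc <= e)
  (hdecay : forall t, 0 <= t <= t1 -> phi 0 + e / 2 <= exp (- rho * t) * (phi 0 + e)).

Lemma err_nonneg (t : R) : 0 <= t -> 0 <= C * exp t * ((sigma ^ 2 + mu ^ 2) * t).
Proof.
  intros Ht. assert (0 < exp t) by apply exp_pos.
  assert (0 <= sigma ^ 2) by apply pow2_ge_0. assert (0 <= mu ^ 2) by apply pow2_ge_0.
  apply Rmult_le_pos; [apply Rmult_le_pos|]; nra.
Qed.

Lemma upper_bound_of_boundary (n : nat) : (1 <= n)%nat ->
  (forall t, 0 <= t <= t1 ->
     v n t 0 <= exp (- rho * t) * (phi 0 + e + C * exp t * ((sigma ^ 2 + mu ^ 2) * t))) ->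
  forall t x, 0 <= t <= t1 -> 0 <= x ->
    v n t x <= exp (- rho * t) * (phi x + e + C * exp t * ((sigma ^ 2 + mu ^ 2) * t)).
Proof.
  intros Hn Hleft t x0 Ht Hx0.
  destruct hphi as [_ [Hmon [Hnn [_ [_ [_ Hb]]]]]].
  set (K := x0 + A + mu * T).
  assert (HK : 0 <= K) by (specialize (Hb 0 (Rle_refl 0)); unfold K; nra).
  set (L := 1 + (1 + K) / C).
  assert (HL : 1 <= L) by (unfold L; assert (0 <= (1 + K) / C) by (apply Rdiv_le_0_compat; lra); lra).
  (* At x = x0 + L the quadratic part of the barrier dominates the a priori bound on v n. *)
  assert (HCL : x0 + L + A + mu * T <= C * L ^ 2).
  { replace (C * L ^ 2) with (L * (C + 1 + K)) by (unfold L; field; lra). unfold K in *. nra. }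
  rewrite <- (Rmult_1_l (v n t x0)).
  replace (exp (- rho * t) * _) with (barrier rho mu sigma (phi x0 + e) C 0 x0 0 t x0)
    by (rewrite barrier_at_center; ring).
  apply (barrier_comparison mu sigma rho T (v n) 1 (phi x0 + e) C 0 x0 0 t1 (x0 + L));
    auto; try lra.
  - intros x Hx. rewrite barrier_at_0, (hinit n Hn x ltac:(lra)).
    specialize (henv x0 x Hx0 ltac:(lra)). apply Rabs_le_between' in henv. lra.
  - intros u Hu. specialize (Hleft u Hu).
    assert (phi 0 <= phi x0) by (apply Hmon; lra).
    assert (0 <= C * exp u * x0 ^ 2)
      by (apply Rmult_le_pos; [apply Rmult_le_pos; [lra | left; apply exp_pos] | apply pow2_ge_0]).
    assert (0 < exp (- rho * u)) by apply exp_pos.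
    unfold barrier. nra.
  - intros u Hu. assert (Hv := proj2 (hbounds n Hn u (x0 + L) ltac:(split; lra))).
    eapply Rle_trans; [|apply barrier_ge_discounted_initial; lra].
    rewrite barrier_at_0, Rmult_0_l, Rplus_0_r. replace (x0 + L - x0) with L by ring.
    assert (0 <= phi x0) by (apply Hnn; lra).
    assert (mu * u <= mu * T) by nra.
    rewrite Rmult_1_l. eapply Rle_trans; [exact Hv|].
    apply Rmult_le_compat_l; [left; apply exp_pos | lra].
Qed.

Lemma upper_bound (n : nat) : (1 <= n)%nat -> forall t x, 0 <= t <= t1 -> 0 <= x ->
  v n t x <= exp (- rho * t) * (phi x + e + C * exp t * ((sigma ^ 2 + mu ^ 2) * t)).
Proof.
  intros Hn. destruct n as [|k]; [lia|]. clear Hn.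
  assert (Hp0 : 0 <= phi 0) by (destruct hphi as [_ [_ [Hnn _]]]; apply Hnn, Rle_refl).
  induction k as [|k IH]; apply upper_bound_of_boundary; try lia; intros t Ht;
    assert (Herr := err_nonneg t (proj1 Ht));
    assert (0 < exp (- rho * t)) by apply exp_pos.
  - specialize (hv1 t Ht). specialize (hdecay t Ht). apply Rabs_def2 in hv1. nra.
  - assert (Hbd := hbdry (S (S k)) ltac:(lia) t ltac:(lra)).
    replace (S (S k) - 1)%nat with (S k) in Hbd by lia.
    apply (Iop0_pos_least lf lp _ _ Hbd); [apply Rmult_le_pos; lra|]. intros z Hz.
    specialize (IH t z Ht ltac:(lra)).
    assert (Hj := in_CA_jump_le lf lp A phi hphi z Hz). rewrite (cost_pos lf lp z Hz) in *.
    assert (exp (- rho * t) <= 1) by (rewrite <- exp_0; apply exp_monotone; nra).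
    assert (0 <= (1 - exp (- rho * t)) * (lf + (1 + lp) * z)) by (apply Rmult_le_pos; nra).
    assert (0 <= exp (- rho * t) * (phi 0 - (phi z - (lf + (1 + lp) * z))))
      by (apply Rmult_le_pos; lra).
    nra.
Qed.

Lemma lower_bound_of_boundary (n : nat) : (1 <= n)%nat ->
  (forall t, 0 <= t <= t1 -> exp (- rho * t) * (phi 0 - 8 * e) <= v n t 0) ->
  forall t x, 0 <= t <= t1 -> 0 <= x ->
    exp (- rho * t) * (phi x - e - C * exp t * ((sigma ^ 2 + mu ^ 2) * t)
                       - 8 * e * exp (- lam * x + sigma ^ 2 * lam ^ 2 / 2 * t)) <= v n t x.
Proof.
  intros Hn Hleft t x0 Ht Hx0.
  destruct hphi as [_ [_ [_ [_ [_ [_ Hb]]]]]].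
  assert (HA : 0 <= A) by (specialize (Hb 0 (Rle_refl 0)); lra).
  set (g := barrier rho mu sigma (- (phi x0 - e)) C (8 * e) x0 lam).
  replace (exp (- rho * t) * _) with (- g t x0) by (unfold g; rewrite barrier_at_center; ring).
  cut (-1 * v n t x0 <= g t x0); [lra|].
  apply (barrier_comparison mu sigma rho T (v n) (-1) _ C (8 * e) x0 lam t1 (x0 + A + 1));
    auto; try lra.
  - intros x Hx. rewrite barrier_at_0, (hinit n Hn x ltac:(lra)).
    specialize (henv x0 x Hx0 ltac:(lra)). apply Rabs_le_between' in henv.
    assert (0 <= 8 * e * exp (- lam * x)) by (apply Rmult_le_pos; [lra | left; apply exp_pos]).
    lra.
  - intros u Hu. specialize (Hleft u Hu).
    assert (Henv0 := henv 0 x0 (Rle_refl 0) Hx0). apply Rabs_le_between' in Henv0.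
    eapply Rle_trans; [|apply barrier_ge_discounted_initial; lra].
    rewrite barrier_at_0, Rmult_0_r, exp_0.
    replace ((0 - x0) ^ 2) with ((x0 - 0) ^ 2) by ring.
    assert (0 <= exp (- rho * u) * (phi 0 + e + C * (x0 - 0) ^ 2 - phi x0))
      by (apply Rmult_le_pos; [left; apply exp_pos | lra]).
    nra.
  - intros u Hu. assert (Hv := proj1 (hbounds n Hn u (x0 + A + 1) ltac:(split; lra))).
    specialize (Hb x0 Hx0).
    eapply Rle_trans; [|apply barrier_ge_discounted_initial; lra].
    rewrite barrier_at_0.
    assert (0 <= C * (x0 + A + 1 - x0) ^ 2) by (apply Rmult_le_pos; [lra | apply pow2_ge_0]).
    assert (0 <= 8 * e * exp (- lam * (x0 + A + 1)))
      by (apply Rmult_le_pos; [lra | left; apply exp_pos]).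
    assert (0 <= exp (- rho * u) * (x0 + A + 1 - (phi x0 - e) + C * (x0 + A + 1 - x0) ^ 2
                                    + 8 * e * exp (- lam * (x0 + A + 1))))
      by (apply Rmult_le_pos; [left; apply exp_pos | lra]).
    nra.
Qed.

Lemma lower_bound (n : nat) : (1 <= n)%nat -> forall t x, 0 <= t <= t1 -> 0 <= x ->
  exp (- rho * t) * (phi x - e - C * exp t * ((sigma ^ 2 + mu ^ 2) * t)
                     - 8 * e * exp (- lam * x + sigma ^ 2 * lam ^ 2 / 2 * t)) <= v n t x.
Proof.
  intros Hn. destruct n as [|k]; [lia|]. clear Hn.
  assert (Hp0 : 0 <= phi 0) by (destruct hphi as [_ [_ [Hnn _]]]; apply Hnn, Rle_refl).
  induction k as [|k IH]; apply lower_bound_of_boundary; try lia; intros t Ht;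
    assert (0 < exp (- rho * t)) by apply exp_pos;
    assert (exp (- rho * t) <= 1) by (rewrite <- exp_0; apply exp_monotone; nra).
  - assert (Hpos := proj1 (hbounds 1 (le_n 1) t 0 ltac:(split; lra))).
    rewrite Rmult_0_r in Hpos.
    specialize (hv1 t Ht). apply Rabs_def2 in hv1.
    destruct (Rle_lt_dec (phi 0 - 8 * e) 0); nra.
  - assert (Hpos := proj1 (hbounds (S (S k)) ltac:(lia) t 0 ltac:(split; lra))).
    rewrite Rmult_0_r in Hpos.
    destruct (Req_dec (phi 0) 0) as [Hz0|Hz0]; [rewrite Hz0; nra|].
    assert (Hphi0 : Finite (phi 0) = rbar_pos (Iop lf lp phi 0))
      by (destruct hphi as [_ [_ [_ [_ [Hfix _]]]]]; exact Hfix).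
    destruct (Iop0_pos_approx lf lp phi (phi 0) Hphi0 e ltac:(lra) he) as [z [Hz Hjz]].
    (* Near-optimal jumps are long (lam z >= 4), so at their target the corrector
       8 e e^{-lam z + ...} is at most 4 e. *)
    destruct (hjump z Hz Hjz) as [Hlz Hcz].
    assert (Hbd := hbdry (S (S k)) ltac:(lia) t ltac:(lra)).
    replace (S (S k) - 1)%nat with (S k) in Hbd by lia.
    assert (Hstep := Iop0_pos_ub lf lp _ _ Hbd z Hz). simpl in Hstep.
    specialize (IH t z Ht ltac:(lra)).
    assert (HX := exp_opp_add_le_half _ _ Hlz (hgam t Ht)).
    replace (- (lam * z)) with (- lam * z) in HX by ring.
    assert (Herr := herr t Ht).
    assert (Hcost : (1 - exp (- rho * t)) * cost lf lp z <= exp (- rho * t) * e).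
    { apply discounted_loss_le, Rle_trans with ((exp (rho * t) - 1) * Zc); [|apply hZc, Ht].
      apply Rmult_le_compat_l; [|exact Hcz].
      assert (1 <= exp (rho * t)) by (rewrite <- exp_0; apply exp_monotone; nra). lra. }
    assert (0 <= exp (- rho * t) * (phi z - cost lf lp z + e - phi 0))
      by (apply Rmult_le_pos; lra).
    assert (e * exp (- lam * z + sigma ^ 2 * lam ^ 2 / 2 * t) <= e * / 2)
      by (apply Rmult_le_compat_l; lra).
    assert (0 <= exp (- rho * t) * (5 * e - C * exp t * ((sigma ^ 2 + mu ^ 2) * t)
                                    - 8 * e * exp (- lam * z + sigma ^ 2 * lam ^ 2 / 2 * t)))
      by (apply Rmult_le_pos; lra).
    nra.
Qed.

Lemma small_time_estimate (n : nat) : (1 <= n)%nat -> forall t x, 0 <= t <= t1 -> 0 <= x ->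
  Rabs (exp (rho * t) * v n t x - phi x) <= 18 * e.
Proof.
  intros Hn t x Ht Hx.
  assert (HQ : 0 < exp (rho * t)) by apply exp_pos.
  assert (Hup := Rmult_le_compat_l _ _ _ (Rlt_le _ _ HQ) (upper_bound n Hn t x Ht Hx)).
  assert (Hlow := Rmult_le_compat_l _ _ _ (Rlt_le _ _ HQ) (lower_bound n Hn t x Ht Hx)).
  rewrite exp_rho_cancel in Hup, Hlow.
  assert (Herr := herr t Ht). assert (Herr0 := err_nonneg t (proj1 Ht)).
  assert (exp (- lam * x + sigma ^ 2 * lam ^ 2 / 2 * t) <= 2).
  { apply Rle_trans with (exp (sigma ^ 2 * lam ^ 2 / 2 * t)); [|apply hgam, Ht].
    apply exp_monotone. nra. }
  assert (0 < exp (- lam * x + sigma ^ 2 * lam ^ 2 / 2 * t)) by apply exp_pos.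
  apply Rabs_le. nra.
Qed.

End Tolerance.

Lemma uniform_estimate (eps : R) : 0 < eps -> exists d, 0 < d < T /\
  forall n, (1 <= n)%nat -> forall t x, 0 <= t <= d -> 0 <= x ->
    Rabs (exp (rho * t) * v n t x - phi x) <= eps.
Proof.
  intros Heps.
  set (e := Rmin (eps / 18) (lf / 2)).
  assert (He : 0 < e) by (apply Rmin_pos; lra).
  assert (He18 : 18 * e <= eps) by (generalize (Rmin_l (eps / 18) (lf / 2)); fold e; lra).
  assert (Helf : e <= lf / 2) by apply Rmin_r.
  destruct (in_CA_quadratic_envelope lf lp A phi hphi e He) as [C [HC Henv]].
  destruct (in_CA_near_optimal_jump lf lp A phi hphi hlf hlp) as [lam [Zc [Hlam Hjump0]]].
  assert (Hjump : forall z, 0 < z -> phi 0 - e < phi z - cost lf lp z ->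
                  4 <= lam * z /\ cost lf lp z <= Zc)
    by (intros z Hz Hjz; apply Hjump0; lra).
  destruct (cont2_within_of_filterlim _ _ 0 0 (hcont 1 (le_n 1) 0 0 ltac:(split; lra)) (e / 2))
    as [dv [Hdv Hv1]]; [lra|].
  rewrite (hinit 1 (le_n 1) 0 (Rle_refl 0)) in Hv1.
  set (kap := sigma ^ 2 + mu ^ 2). set (gam := sigma ^ 2 * lam ^ 2 / 2).
  assert (Hnear : locally 0 (fun t =>
    (C * exp t * (kap * t) < e /\ exp (gam * t) < 2) /\
    ((exp (rho * t) - 1) * Zc < e /\ phi 0 + e / 2 - exp (- rho * t) * (phi 0 + e) < 0) /\
    (t < dv /\ t < T))).
  { repeat apply filter_and; apply locally_lt_of_derivable;
      try (auto_derive; auto; fail);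
      rewrite ?Rmult_0_r, ?Rmult_0_l, ?exp_0; lra. }
  destruct (locally_0_initial_interval _ Hnear) as [t1 [Ht1 Hsmall]].
  assert (Ht1T : t1 < T) by (apply (Hsmall t1); lra).
  exists t1. split; [lra|]. intros n Hn t x Ht Hx.
  apply Rle_trans with (18 * e); [|exact He18].
  apply (small_time_estimate e C lam Zc t1); auto; try lra.
  - intros u Hu. destruct (Hsmall u Hu) as [_ [_ [Hu1 _]]].
    apply Hv1; [split; lra | rewrite Rminus_0_r, Rabs_pos_eq; lra | rewrite Rminus_0_r, Rabs_R0; lra].
  - intros u Hu. apply Rlt_le, (Hsmall u Hu).
  - intros u Hu. apply Rlt_le, (Hsmall u Hu).
  - intros u Hu. apply Rlt_le, (Hsmall u Hu).
  - intros u Hu. destruct (Hsmall u Hu) as [_ [[_ H] _]]. lra.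
Qed.

Lemma rescaled_error_bounded (n : nat) : (1 <= n)%nat -> forall t x, inQbar T t x ->
  Rabs (exp (rho * t) * v n t x - phi x) <= A + mu * T.
Proof.
  intros Hn t x Htx. destruct (hbounds n Hn t x Htx) as [Hlo Hhi].
  assert (HQ : 0 <= exp (rho * t)) by (left; apply exp_pos).
  apply (Rmult_le_compat_l _ _ _ HQ) in Hlo, Hhi. rewrite exp_rho_cancel in Hlo, Hhi.
  destruct hphi as [_ [_ [_ [_ [_ [_ Hb]]]]]]. destruct Htx as [Ht Hx]. specialize (Hb x Hx).
  assert (mu * t <= mu * T) by nra. assert (0 <= mu * t) by nra.
  apply Rabs_le. lra.
Qed.

End UniformEstimate.

(** * Moduli *)

Lemma Lub_Rbar_real (E : R -> Prop) (r0 M : R) :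
  E r0 -> (forall r, E r -> r <= M) ->
  (forall r, E r -> r <= real (Lub_Rbar E)) /\
  (forall b, (forall r, E r -> r <= b) -> real (Lub_Rbar E) <= b).
Proof.
  intros Hr0 HM. destruct (Lub_Rbar_correct E) as [Hub Hlub].
  destruct (Lub_Rbar E) as [l| |] eqn:El; simpl.
  - split; [exact Hub | intros b Hb; exact (Hlub (Finite b) Hb)].
  - exfalso. exact (Hlub (Finite M) HM).
  - exfalso. exact (Hub r0 Hr0).
Qed.

Lemma modulus_of_uniform_bound (I : Type) (P : I -> Prop) (f : I -> R -> R) (T M : R) :
  (forall i t, P i -> 0 <= t <= T -> f i t <= M) ->
  (forall eps, 0 < eps -> exists d, 0 < d /\
     forall i t, P i -> 0 <= t <= d -> t <= T -> f i t <= eps) ->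
  exists m, is_modulus m /\ forall i t, P i -> 0 <= t <= T -> f i t <= m t.
Proof.
  intros HM Hunif.
  set (E t r := r = 0 \/ exists i s, P i /\ 0 <= s <= t /\ s <= T /\ r = f i s).
  set (S t := real (Lub_Rbar (E t))).
  assert (HS : forall t, (forall r, E t r -> r <= S t) /\
                         (forall b, (forall r, E t r -> r <= b) -> S t <= b)).
  { intros t. apply (Lub_Rbar_real (E t) 0 (Rmax M 0)); [left; reflexivity|].
    intros r [->|[i [s [Hi [Hs [HsT ->]]]]]]; [apply Rmax_r|].
    eapply Rle_trans; [apply HM; auto; lra | apply Rmax_l]. }
  assert (HS0 : forall t, 0 <= S t) by (intros t; apply (proj1 (HS t)); left; reflexivity).
  assert (Hsmall : forall eps, 0 < eps -> exists d, 0 < d /\ forall t, t < d -> S t <= eps).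
  { intros eps Heps. destruct (Hunif eps Heps) as [d [Hd Hf]].
    exists d; split; auto. intros t Ht. apply (proj2 (HS t)).
    intros r [->|[i [s [Hi [Hs [HsT ->]]]]]]; [lra | apply Hf; auto; lra]. }
  exists (fun t => t + S t). split; [split; [|split; [|split]]|].
  - intros s t Hs Hst. enough (S s <= S t) by lra.
    apply (proj2 (HS s)). intros r Hr. apply (proj1 (HS t)).
    destruct Hr as [->|[i [u [Hi [Hu [HuT ->]]]]]]; [left; reflexivity|].
    right. exists i, u. repeat split; auto; lra.
  - intros t Ht. generalize (HS0 t). lra.
  - enough (S 0 <= 0) by (generalize (HS0 0); lra).
    apply Rnot_lt_le. intro Hpos.
    destruct (Hsmall (S 0 / 2)) as [d [Hd Hd']]; [lra|].
    specialize (Hd' 0 Hd). lra.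
  - apply filterlim_locally. intros eps.
    destruct (Hsmall (eps / 2)) as [d [Hd Hd']]; [apply is_pos_div_2|].
    assert (Hpos : 0 < Rmin d (eps / 2)) by (apply Rmin_pos; [lra | apply is_pos_div_2]).
    exists (mkposreal _ Hpos). intros y Hy Hy0.
    change (Rabs (y - 0) < Rmin d (eps / 2)) in Hy.
    rewrite Rminus_0_r, Rabs_pos_eq in Hy by auto.
    assert (y < d) by (eapply Rlt_le_trans; [exact Hy | apply Rmin_l]).
    assert (y < eps / 2) by (eapply Rlt_le_trans; [exact Hy | apply Rmin_r]).
    specialize (Hd' y ltac:(lra)). specialize (HS0 y).
    apply ball_R. rewrite Rminus_0_r, Rabs_pos_eq; lra.
  - intros i t Hi Ht. enough (f i t <= S t) by (generalize (HS0 t); lra).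
    apply (proj1 (HS t)). right. exists i, t. repeat split; auto; lra.
Qed.

Theorem lemma3p10
  (mu sigma rho T lf lp A : R) (phi : R -> R) (v : nat -> R -> R -> R)
  (hmu : 0 < mu) (hsigma : 0 < sigma) (hrho : 0 < rho) (hT : 0 < T)
  (hlf : 0 < lf) (hlp : 0 < lp)
  (hA : mu * T / (exp (rho * T) - 1) <= A)
  (hphi : in_CA lf lp A phi)
  (hv0 : forall t x, inQbar T t x -> v 0%nat t x = v0 mu sigma rho phi t x)
  (hsmooth : forall n, (1 <= n)%nat -> smooth_on_Q T (v n))
  (hcont : forall n, (1 <= n)%nat -> cont_on_Qbar T (v n))
  (hpde : forall n, (1 <= n)%nat -> forall t x, inQ T t x ->
     rho * v n t x
     + Derive (fun s => v n s x) t
     - mu * Derive (fun y => v n t y) x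
     - / 2 * sigma ^ 2 * Derive (fun y => Derive (fun z => v n t z) y) x = 0)
  (hinit : forall n, (1 <= n)%nat -> forall x, 0 <= x -> v n 0 x = phi x)
  (hbdry : forall n, (1 <= n)%nat -> forall t, 0 <= t <= T ->
     Finite (v n t 0) = rbar_pos (Iop lf lp (fun y => v (n - 1)%nat t y) 0))
  (hbounds : forall n, (1 <= n)%nat -> forall t x, inQbar T t x ->
     exp (- rho * t) * x <= v n t x <= exp (- rho * t) * (x + A + mu * t)) :
  exists m : R -> R, is_modulus m /\
    forall n, (1 <= n)%nat -> forall t x, inQbar T t x ->
      Rabs (exp (rho * t) * v n t x - phi x) <= m t.
Proof.
  destruct (modulus_of_uniform_bound (nat * R) (fun p => (1 <= fst p)%nat /\ 0 <= snd p)
              (fun p t => Rabs (exp (rho * t) * v (fst p) t (snd p) - phi (snd p)))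
              T (A + mu * T)) as [m [Hm Hbound]].
  - intros [n x] t [Hn Hx] Ht.
    exact (rescaled_error_bounded mu rho T lf lp A phi v hmu hphi hbounds n Hn t x (conj Ht Hx)).
  - intros eps Heps.
    destruct (uniform_estimate mu sigma rho T lf lp A phi v hmu hrho hT hlf hlp hphi
                hsmooth hcont hpde hinit hbdry hbounds eps Heps) as [d [Hd Hest]].
    exists d. split; [lra|]. intros [n x] t [Hn Hx] Ht _. exact (Hest n Hn t x Ht Hx).
  - exists m. split; [exact Hm|]. intros n Hn t x [Ht Hx]. exact (Hbound (n, x) t (conj Hn Hx) Ht).
Qed.
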